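(* Fix $a\in[0,\infty)$. For a function $O:[0,1]^2\to[0,1]$ the following are equivalent: (1) There exist a continuous and strictly decreasing function $\theta:[0,1]\to[0,\infty]$ and a continuous and decreasing function $\vartheta:[0,\infty]\to[0,1]$ such that $O(x,y)=\vartheta(\theta(x)+\theta(y))$ for all $x,y$, $O$ is an overlap function, and at least one of the following holds: (a) $\theta(x)=\frac{a}{2}$ if and only if $x=1$; (b) $\vartheta(x)=1$ if and only if $x\in[0,a]$. (2) $O$ is an overlap function and there exist a pseudo automorphism $\mathcal{F}$ and a strict t-norm $T$ with $O(x,y)=\mathcal{F}(T(x,y))$ for all $(x,y)\in[0,1]^2$. (3) There exist a strictly increasing bijection $\varphi:[0,1]\to[0,1]$ and a pseudo automorphism $\mathcal{H}$ such that $O(x,y)=\mathcal{H}(\varphi(x)\varphi(y))$ for all $(x,y)\in[0,1]^2$.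
   Context: ''Decreasing'' means non-increasing and ''increasing'' means non-decreasing. Arithmetic in $[0,\infty]$ uses $c+\infty=\infty$; continuity on $[0,\infty]$ refers to the usual topology of the extended half-line. An overlap function is a map $O:[0,1]^2\to[0,1]$ that is (O1) commutative, (O2) $O(x,y)=0$ iff $xy=0$, (O3) $O(x,y)=1$ iff $xy=1$, (O4) increasing in each variable, (O5) continuous. A pseudo automorphism is a continuous increasing map $\mathcal{F}:[0,1]\to[0,1]$ with $\mathcal{F}(x)=1$ iff $x=1$ and $\mathcal{F}(x)=0$ iff $x=0$. A t-norm is a commutative, associative map $T:[0,1]^2\to[0,1]$, increasing in each variable, with $T(x,1)=x$; it is strict if it is continuous and strictly increasing on $(0,1]^2$ (i.e. $T(x,y)<T(x',y)$ whenever $y>0$ and $x<x'$). *)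

(* Functions on [0,1] are total functions R -> R whose behaviour is only
   constrained on [0,1]; [0,oo] is the subset [set x | 0 <= x] of \bar R. *)
From HB Require Import structures.
From mathcomp Require Import all_boot all_order all_algebra.
From mathcomp Require Import all_classical all_reals all_analysis.
Set Implicit Arguments. Unset Strict Implicit. Unset Printing Implicit Defensive.
Import Order.TTheory GRing.Theory Num.Theory.
Import numFieldNormedType.Exports.
Local Open Scope classical_set_scope.
Local Open Scope ring_scope.

Definition unit_I {R : realType} : set R := `[0, 1]%classic.

Definition unit_sq {R : realType} : set (R * R) :=
  [set p | p.1 \in `[0, 1] /\ p.2 \in `[0, 1]].

Definition ext_half {R : realType} : set (\bar R) := [set x | (0 <= x)%E].

Definition overlap {R : realType} (O : R -> R -> R) : Prop :=
  (forall x y, x \in `[0, 1] -> y \in `[0, 1] -> O x y \in `[0, 1]) /\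
  (forall x y, x \in `[0, 1] -> y \in `[0, 1] -> O x y = O y x) /\
  (forall x y, x \in `[0, 1] -> y \in `[0, 1] -> (O x y = 0 <-> x * y = 0)) /\
  (forall x y, x \in `[0, 1] -> y \in `[0, 1] -> (O x y = 1 <-> x * y = 1)) /\
  (forall x x' y, x \in `[0, 1] -> x' \in `[0, 1] -> y \in `[0, 1] ->
     x <= x' -> O x y <= O x' y /\ O y x <= O y x') /\
  {within unit_sq, continuous (fun p : R * R => O p.1 p.2)}.

Definition pseudo_automorphism {R : realType} (F : R -> R) : Prop :=
  (forall x, x \in `[0, 1] -> F x \in `[0, 1]) /\
  {within unit_I, continuous F} /\
  (forall x y, x \in `[0, 1] -> y \in `[0, 1] -> x <= y -> F x <= F y) /\
  (forall x, x \in `[0, 1] -> (F x = 1 <-> x = 1)) /\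
  (forall x, x \in `[0, 1] -> (F x = 0 <-> x = 0)).

Definition tnorm {R : realType} (T : R -> R -> R) : Prop :=
  (forall x y, x \in `[0, 1] -> y \in `[0, 1] -> T x y \in `[0, 1]) /\
  (forall x y, x \in `[0, 1] -> y \in `[0, 1] -> T x y = T y x) /\
  (forall x y z, x \in `[0, 1] -> y \in `[0, 1] -> z \in `[0, 1] ->
     T x (T y z) = T (T x y) z) /\
  (forall x x' y, x \in `[0, 1] -> x' \in `[0, 1] -> y \in `[0, 1] ->
     x <= x' -> T x y <= T x' y /\ T y x <= T y x') /\
  (forall x, x \in `[0, 1] -> T x 1 = x).

Definition strict_tnorm {R : realType} (T : R -> R -> R) : Prop :=
  tnorm T /\
  {within unit_sq, continuous (fun p : R * R => T p.1 p.2)} /\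
  (forall x x' y, x \in `[0, 1] -> x' \in `[0, 1] -> y \in `[0, 1] ->
     0 < y -> x < x' -> T x y < T x' y).

Definition incr_bij01 {R : realType} (phi : R -> R) : Prop :=
  (forall x, x \in `[0, 1] -> phi x \in `[0, 1]) /\
  (forall x y, x \in `[0, 1] -> y \in `[0, 1] -> x < y -> phi x < phi y) /\
  (forall z, z \in `[0, 1] -> exists2 x, x \in `[0, 1] & phi x = z).

From HB Require Import structures.
From mathcomp Require Import all_boot all_order all_algebra.
From mathcomp Require Import all_classical all_reals all_analysis.
From mathcomp Require Import ring lra.
Import Order.TTheory GRing.Theory Num.Theory.
Import numFieldNormedType.Exports.
Local Open Scope classical_set_scope.
Local Open Scope ring_scope.
Set Implicit Arguments. Unset Strict Implicit. Unset Printing Implicit Defensive.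

(* (3) => (1): theta = a/2 - ln o phi and vtheta = H o (u |-> min 1 (e^(a - u)))
   give vtheta (theta x + theta y) = H (phi x * phi y), and theta x = a/2 iff x = 1.
   (3) => (2): T x y = phi^-1 (phi x * phi y) is a strict t-norm and O = (H o phi) o T.
   (2) => (3): a strict t-norm is isomorphic to the product.  With T-powers x^(n) and
   c = 1/2, f x = sup {m/n | x^(n) <= c^(m)} satisfies f (T x y) = f x + f y and maps
   (0, 1] decreasingly onto [0, +oo); take phi = exp (- f) and H = F o phi^-1.
   (1) => (3): O y y > 0 for y > 0 forces theta 0 = +oo, so theta maps (0, 1] onto
   [theta 1, +oo) and phi = exp (theta 1 - theta) is an increasing bijection of [0, 1];
   then H s = O (phi^-1 s) 1 works since theta x + theta y = theta z + theta 1 for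
   z = phi^-1 (phi x * phi y). *)

Section unit_interval.
Context {R : realType}.
Local Notation I := (`[0, 1] : interval R).
Implicit Types x y : R.

Lemma in01 x : 0 <= x -> x <= 1 -> x \in I.
Proof. by move=> x0 x1; rewrite in_itv /= x0 x1. Qed.

Lemma in01_0 : 0 \in I. Proof. by rewrite in01 ?ler01. Qed.
Lemma in01_1 : 1 \in I. Proof. by rewrite in01 ?ler01. Qed.

Lemma in01_ge0 x : x \in I -> 0 <= x.
Proof. by rewrite in_itv /= => /andP[]. Qed.

Lemma in01_le1 x : x \in I -> x <= 1.
Proof. by rewrite in_itv /= => /andP[]. Qed.

Lemma in01_eq0_or_gt0 x : x \in I -> x = 0 \/ 0 < x.
Proof. by move/in01_ge0; rewrite le_eqVlt => /predU1P[<-|]; [left|right]. Qed.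

Lemma in01_mul x y : x \in I -> y \in I -> x * y \in I.
Proof.
move=> xI yI; apply: in01; first by rewrite mulr_ge0 ?in01_ge0.
by rewrite mulr_ile1 ?in01_ge0 ?in01_le1.
Qed.

Lemma mul01_eq1 x y : x \in I -> y \in I -> (x * y = 1 <-> x = 1 /\ y = 1).
Proof.
move=> xI yI; split => [xy1|[-> ->]]; last by rewrite mulr1.
have x1 : x = 1.
  apply/eqP; rewrite eq_le in01_le1 //= -xy1.
  by rewrite ler_piMr ?in01_ge0 ?in01_le1.
by move: xy1; rewrite x1 mul1r.
Qed.

Lemma exists_in01_gt0_lt d : 0 < d -> exists y, [/\ y \in I, 0 < y & y < d].
Proof.
move=> d0; pose m := Num.min d 1.
have m0 : 0 < m by rewrite lt_min d0 ltr01.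
have md : m <= d by rewrite ge_min lexx.
have m1 : m <= 1 by rewrite ge_min lexx orbT.
by exists (m / 2); split; rewrite ?in01; lra.
Qed.

Lemma exists_in01_near1 d : 0 < d -> exists z, [/\ z \in I, 0 < z, z < 1 & 1 - d < z].
Proof.
move=> d0; have [|y [yI y0]] := @exists_in01_gt0_lt (Num.min d 1).
  by rewrite lt_min d0 ltr01.
rewrite lt_min => /andP[yd y1].
by exists (1 - y); split; rewrite ?in01; lra.
Qed.

Lemma ler_add_2invS x y : (forall n, x <= y + 2 / n.+1%:R) -> x <= y.
Proof.
move=> H; rewrite leNgt; apply/negP => yx.
have [k hk] := ltr_add_invr yx.
have k2 : (k.*2.+1).+1%:R = 2 * k.+1%:R :> R.
  by rewrite -[2 in RHS]/(2%:R) -natrM mul2n doubleS.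
have := H k.*2.+1; rewrite k2 invfM mulrA divff ?mul1r //.
by move/(lt_le_trans hk); rewrite ltxx.
Qed.

Lemma dist_min1_le x y : `|Num.min 1 x - Num.min 1 y| <= `|x - y|.
Proof.
case: (leP 1 x) => x1; case: (leP 1 y) => y1; rewrite ?subrr ?normr0 //.
- by rewrite !ger0_norm; lra.
- by rewrite !ler0_norm; lra.
Qed.

End unit_interval.

Lemma within_continuous_comp_within {T U V : topologicalType} (A : set T) (B : set U)
    (g : T -> U) (f : U -> V) :
  (forall x, A x -> B (g x)) -> {within A, continuous g} -> {within B, continuous f} ->
  {within A, continuous (f \o g)}.
Proof.
move=> gAB /subspace_continuousP gc /subspace_continuousP fc.
apply/subspace_continuousP => x Ax; apply: cvg_comp (fc _ (gAB _ Ax)) => P /= BP.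
apply: (@filterS _ (nbhs x)) (gc x Ax _ BP) => y BPy Ay.
exact: BPy Ay (gAB _ Ay).
Qed.

Lemma within_continuousM {T : topologicalType} {R : realType} (A : set T) (f g : T -> R) :
  {within A, continuous f} -> {within A, continuous g} ->
  {within A, continuous (f \* g)}.
Proof. by move=> cf cg x; apply: cvgM; [exact: cf|exact: cg]. Qed.

Section within_continuity.
Context {R : realType}.

Lemma within_continuous_mul01 (f : R -> R) : {within unit_I, continuous f} ->
  {within unit_sq, continuous (fun p : R * R => f p.1 * f p.2)}.
Proof.
move=> fc; apply: within_continuousM; apply: within_continuous_comp_within fc.
- by move=> p [].
- by apply: continuous_subspaceT => p; exact: cvg_fst.
- by move=> p [].
- by apply: continuous_subspaceT => p; exact: cvg_snd.
Qed.

Lemma continuous_dist (f : R -> R) x : {for x, continuous f} ->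
  forall e, 0 < e -> exists2 d, 0 < d & forall y, `|x - y| < d -> `|f x - f y| < e.
Proof.
move=> /cvgrPdist_lt fc e /fc /nbhs_ballP[d /= d0 Hd].
by exists d.
Qed.

Lemma within_continuous_dist (A : set R) (f : R -> R) : {within A, continuous f} ->
  forall x, A x -> forall e, 0 < e -> exists2 d, 0 < d &
    forall y, A y -> `|x - y| < d -> `|f x - f y| < e.
Proof.
move=> /subspace_continuousP fc x Ax e e0.
move: (fc x Ax) => /cvgrPdist_lt /(_ e e0).
rewrite near_withinE => /nbhs_ballP[d /= d0 Hd].
by exists d => // y Ay xy; exact: Hd.
Qed.

Lemma within_continuous2_dist (A : set (R * R)) (f : R * R -> R) :
  {within A, continuous f} ->
  forall x, A x -> forall e, 0 < e -> exists2 d, 0 < d & forall y, A y ->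
    `|x.1 - y.1| < d -> `|x.2 - y.2| < d -> `|f x - f y| < e.
Proof.
move=> /subspace_continuousP fc x Ax e e0.
move: (fc x Ax) => /cvgrPdist_lt /(_ e e0).
rewrite near_withinE => /nbhs_ballP[d /= d0 Hd].
by exists d => // y Ay xy1 xy2; exact: Hd.
Qed.

Lemma within_continuous_dist_pinfty (A : set R) (f : R -> \bar R) :
  {within A, continuous f} -> forall x, A x -> f x = +oo%E ->
  forall M, exists2 d, 0 < d & forall y, A y -> `|x - y| < d -> (M%:E <= f y)%E.
Proof.
move=> /subspace_continuousP fc x Ax fx M.
have : f @ within A (nbhs x) --> f x := fc x Ax.
rewrite fx => /cvgeyPge /(_ M).
rewrite near_withinE => /nbhs_ballP[d /= d0 Hd].
by exists d => // y Ay xy; exact: Hd.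
Qed.

Lemma fine_within_continuous (A : set R) (f : R -> \bar R) :
  (forall x, A x -> f x \is a fin_num) -> {within A, continuous f} ->
  {within A, continuous (fine \o f)}.
Proof.
move=> ffin /subspace_continuousP fc; apply/subspace_continuousP => x Ax.
by apply: fine_cvg; rewrite fineK ?ffin //; exact: fc.
Qed.

Lemma dist_within_continuousE (A : set R) (f : R -> \bar R) :
  (forall x, A x -> f x != -oo%E) ->
  (forall x r, A x -> f x = r%:E -> forall e, 0 < e -> exists2 d, 0 < d &
    forall y, A y -> `|x - y| < d -> exists2 s, f y = s%:E & `|r - s| < e) ->
  (forall x, A x -> f x = +oo%E -> forall M, exists2 d, 0 < d &
    forall y, A y -> `|x - y| < d -> (M%:E <= f y)%E) ->
  {within A, continuous f}.
Proof.
move=> fN fin pinfty; apply/subspace_continuousP => x Ax.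
change (f @ within A (nbhs x) --> f x).
case fx: (f x) => [r| |]; last by move: (fN x Ax); rewrite fx.
- apply/fine_cvgP; split.
    have [d d0 Hd] := fin x r Ax fx 1 ltr01.
    rewrite near_withinE; apply/nbhs_ballP; exists d => //= y xy Ay.
    by have [s -> _] := Hd y Ay xy.
  apply/cvgrPdist_lt => e e0; have [d d0 Hd] := fin x r Ax fx e e0.
  rewrite near_withinE; apply/nbhs_ballP; exists d => //= y xy Ay.
  by have [s -> ?] := Hd y Ay xy.
- apply/cvgeyPge => M; have [d d0 Hd] := pinfty x Ax fx M.
  rewrite near_withinE; apply/nbhs_ballP; exists d => //= y xy Ay.
  exact: Hd.
Qed.

Lemma dist_within_continuous_ext_half (f : \bar R -> R) :
  (forall e, 0 < e -> exists M : R, forall v, (0 <= v)%E -> (M%:E < v)%E ->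
      `|f +oo%E - f v| < e) ->
  (forall r, 0 <= r -> forall e, 0 < e -> exists2 d, 0 < d &
    forall s, 0 <= s -> `|r - s| < d -> `|f r%:E - f s%:E| < e) ->
  {within ext_half, continuous f}.
Proof.
move=> pinfty fin; apply/subspace_continuousP => -[r| |] //= r0.
- apply/cvgrPdist_lt => e e0; have [d d0 Hd] := fin r r0 e e0.
  rewrite near_withinE.
  suff : nbhs r (fun s : R => (0 <= s%:E)%E -> `|f r%:E - f s%:E| < e) by [].
  by apply/nbhs_ballP; exists d => //= s rs s0; apply: Hd; rewrite -?lee_fin.
- apply/cvgrPdist_lt => e e0; have [M HM] := pinfty e e0.
  rewrite near_withinE; exists M; split; first exact: num_real.
  by move=> v Mv v0; exact: HM.
Qed.

End within_continuity.

Section increasing_bijection.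
Context {R : realType}.
Local Notation I := (`[0, 1] : interval R).
Variable phi : R -> R.
Hypothesis phi_bij : incr_bij01 phi.

Lemma bij01_in01 x : x \in I -> phi x \in I.
Proof. by case: phi_bij => + _; apply. Qed.

Lemma bij01_lt x y : x \in I -> y \in I -> (phi x < phi y) = (x < y).
Proof.
case: phi_bij => _ [mono _] xI yI.
case: (ltgtP x y) => [xy|yx|->]; last exact: ltxx.
- exact: mono.
- by apply/negbTE; rewrite -leNgt ltW // mono.
Qed.

Lemma bij01_le x y : x \in I -> y \in I -> (phi x <= phi y) = (x <= y).
Proof. by move=> xI yI; rewrite !leNgt bij01_lt. Qed.

Lemma bij01_inj x y : x \in I -> y \in I -> phi x = phi y -> x = y.
Proof.
move=> xI yI pxy; apply/eqP; rewrite eq_le.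
by rewrite -(bij01_le xI yI) -(bij01_le yI xI) pxy lexx.
Qed.

Lemma bij01_surj z : z \in I -> exists2 x, x \in I & phi x = z.
Proof. by case: phi_bij => _ [_]; apply. Qed.

Lemma bij01_0 : phi 0 = 0.
Proof.
have [x xI px0] := bij01_surj in01_0.
apply/eqP; rewrite eq_le in01_ge0 ?bij01_in01 ?in01_0 // andbT.
by rewrite -{2}px0 bij01_le ?in01_0 // in01_ge0.
Qed.

Lemma bij01_1 : phi 1 = 1.
Proof.
have [x xI px1] := bij01_surj in01_1.
apply/eqP; rewrite eq_le in01_le1 ?bij01_in01 ?in01_1 //=.
by rewrite -{1}px1 bij01_le ?in01_1 ?in01_le1.
Qed.

Lemma bij01_eq0 x : x \in I -> (phi x = 0 <-> x = 0).
Proof.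
move=> xI; split=> [|->]; last exact: bij01_0.
by move=> px0; apply: bij01_inj; rewrite ?px0 ?bij01_0 ?in01_0.
Qed.

Lemma bij01_eq1 x : x \in I -> (phi x = 1 <-> x = 1).
Proof.
move=> xI; split=> [|->]; last exact: bij01_1.
by move=> px1; apply: bij01_inj; rewrite ?px1 ?bij01_1 ?in01_1.
Qed.

Lemma bij01_continuous : {within unit_I, continuous phi}.
Proof.
apply: segment_inc_surj_continuous => [x y xI yI|]; first by rewrite bij01_le.
rewrite bij01_0 bij01_1 => z /= zI.
by have [x xI <-] := bij01_surj zI; exists x.
Qed.

Definition inv01 (s : R) := xget 0 [set x | x \in I /\ phi x = s].

Lemma inv01P s : s \in I -> inv01 s \in I /\ phi (inv01 s) = s.
Proof.
move=> sI; have := @xgetPex _ 0 [set x | x \in I /\ phi x = s]; apply.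
by have [x ? ?] := bij01_surj sI; exists x.
Qed.

Lemma inv01_in01 s : s \in I -> inv01 s \in I.
Proof. by case/inv01P. Qed.

Lemma inv01K x : x \in I -> inv01 (phi x) = x.
Proof.
by move=> xI; have [? ?] := inv01P (bij01_in01 xI); apply: bij01_inj.
Qed.

Lemma inv01KV s : s \in I -> phi (inv01 s) = s.
Proof. by case/inv01P. Qed.

Lemma inv01_bij01 : incr_bij01 inv01.
Proof.
split; first exact: inv01_in01.
split=> [s t sI tI st|x xI]; last by exists (phi x); rewrite ?bij01_in01 ?inv01K.
by rewrite -bij01_lt ?inv01_in01 // !inv01KV.
Qed.

End increasing_bijection.

Section pseudo_automorphism.
Context {R : realType}.
Local Notation I := (`[0, 1] : interval R).
Variable F : R -> R.
Hypothesis F_pa : pseudo_automorphism F.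

Lemma pa_in01 x : x \in I -> F x \in I. Proof. by case: F_pa => + _; apply. Qed.

Lemma pa_continuous : {within unit_I, continuous F}. Proof. by case: F_pa => _ []. Qed.

Lemma pa_le x y : x \in I -> y \in I -> x <= y -> F x <= F y.
Proof. by case: F_pa => _ [_ [+ _]]; apply. Qed.

Lemma pa_eq1 x : x \in I -> (F x = 1 <-> x = 1).
Proof. by case: F_pa => _ [_ [_ [+ _]]]; apply. Qed.

Lemma pa_eq0 x : x \in I -> (F x = 0 <-> x = 0).
Proof. by case: F_pa => _ [_ [_ [_ +]]]; apply. Qed.

Lemma pa_comp_bij01 phi : incr_bij01 phi -> pseudo_automorphism (F \o phi).
Proof.
move=> phi_bij; have phiI := bij01_in01 phi_bij.
split; [|split; [|split; [|split]]] => [x xI|||x xI|x xI] /=.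
- exact/pa_in01/phiI.
- apply: (@within_continuous_comp_within _ _ _ unit_I unit_I) => //.
    exact: bij01_continuous.
  exact: pa_continuous.
- by move=> x y xI yI xy; apply: pa_le; rewrite ?phiI ?bij01_le.
- by rewrite pa_eq1 ?phiI // bij01_eq1.
- by rewrite pa_eq0 ?phiI // bij01_eq0.
Qed.

End pseudo_automorphism.

Section strict_tnorm_algebra.
Context {R : realType}.
Local Notation I := (`[0, 1] : interval R).
Variable T : R -> R -> R.
Hypothesis T_strict : strict_tnorm T.

Lemma tnorm_in01 x y : x \in I -> y \in I -> T x y \in I.
Proof. by case: T_strict => -[+ _] _; apply. Qed.

Lemma tnormC x y : x \in I -> y \in I -> T x y = T y x.
Proof. by case: T_strict => -[_ [+ _]] _; apply. Qed.

Lemma tnormA x y z : x \in I -> y \in I -> z \in I -> T x (T y z) = T (T x y) z.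
Proof. by case: T_strict => -[_ [_ [+ _]]] _; apply. Qed.

Lemma tnormr1 x : x \in I -> T x 1 = x.
Proof. by case: T_strict => -[_ [_ [_ [_ +]]]] _; apply. Qed.

Lemma tnorm1r x : x \in I -> T 1 x = x.
Proof. by move=> xI; rewrite tnormC ?tnormr1 ?in01_1. Qed.

Lemma le_tnorm x x' y y' : x \in I -> x' \in I -> y \in I -> y' \in I ->
  x <= x' -> y <= y' -> T x y <= T x' y'.
Proof.
case: T_strict => -[_ [_ [_ [mono _]]]] _ xI x'I yI y'I xx' yy'.
exact: le_trans (mono y y' x yI y'I xI yy').2 (mono x x' y' xI x'I y'I xx').1.
Qed.

Lemma lt_tnorml x x' y : x \in I -> x' \in I -> y \in I -> 0 < y -> x < x' ->
  T x y < T x' y.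
Proof. by case: T_strict => _ [_]; apply. Qed.

Lemma lt_tnorm x x' y y' : x \in I -> x' \in I -> y \in I -> y' \in I ->
  x < x' -> y < y' -> T x y < T x' y'.
Proof.
move=> xI x'I yI y'I xx' yy'.
have y'0 : 0 < y' by apply: le_lt_trans yy'; exact: in01_ge0.
apply: le_lt_trans (lt_tnorml xI x'I y'I y'0 xx').
by apply: le_tnorm => //; exact: ltW.
Qed.

Lemma tnormr0 x : x \in I -> T x 0 = 0.
Proof.
move=> xI; apply/eqP; rewrite eq_le in01_ge0 ?tnorm_in01 ?in01_0 // andbT.
by rewrite -[X in _ <= X](tnorm1r in01_0) le_tnorm ?in01_0 ?in01_1 ?in01_le1.
Qed.

Lemma tnorm0r x : x \in I -> T 0 x = 0.
Proof. by move=> xI; rewrite tnormC ?tnormr0 ?in01_0. Qed.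

Lemma tnorm_lel x y : x \in I -> y \in I -> T x y <= x.
Proof.
by move=> xI yI; rewrite -[X in _ <= X](tnormr1 xI) le_tnorm ?in01_1 ?in01_le1.
Qed.

Lemma tnorm_gt0 x y : x \in I -> y \in I -> 0 < x -> 0 < y -> 0 < T x y.
Proof. by move=> xI yI x0 y0; rewrite -(tnorm0r yI) lt_tnorml ?in01_0. Qed.

Definition tpow x n := iter n (T x) 1.

Lemma tpowS x n : tpow x n.+1 = T x (tpow x n). Proof. by []. Qed.

Lemma tpow_in01 x n : x \in I -> tpow x n \in I.
Proof. by move=> xI; elim: n => [|n IH]; rewrite ?in01_1 ?tpowS ?tnorm_in01. Qed.

Lemma tpow1 x : x \in I -> tpow x 1 = x.
Proof. exact: tnormr1. Qed.

Lemma tpowD x m n : x \in I -> tpow x (m + n) = T (tpow x m) (tpow x n).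
Proof.
move=> xI; elim: m => [|m IH]; first by rewrite add0n tnorm1r ?tpow_in01.
by rewrite addSn !tpowS IH tnormA ?tpow_in01.
Qed.

Lemma tpowM x m n : x \in I -> tpow x (m * n) = tpow (tpow x m) n.
Proof.
by move=> xI; elim: n => [|n IH]; rewrite ?muln0 // mulnS tpowD // IH.
Qed.

Lemma tpow_tnorm x y n : x \in I -> y \in I -> tpow (T x y) n = T (tpow x n) (tpow y n).
Proof.
move=> xI yI; elim: n => [|n IH]; first by rewrite tnormr1 ?in01_1.
have xnI := tpow_in01 n xI; have ynI := tpow_in01 n yI.
rewrite !tpowS IH -(tnormA xI yI) ?tnorm_in01 // (tnormA yI xnI ynI).
by rewrite (tnormC yI xnI) -(tnormA xnI yI ynI) tnormA ?tnorm_in01.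
Qed.

Lemma tpow_gt0 x n : x \in I -> 0 < x -> 0 < tpow x n.
Proof.
move=> xI x0; elim: n => [|n IH]; first exact: ltr01.
by rewrite tpowS tnorm_gt0 ?tpow_in01.
Qed.

Lemma ler_tpow x y n : x \in I -> y \in I -> x <= y -> tpow x n <= tpow y n.
Proof.
move=> xI yI xy; elim: n => [|n IH] //.
by rewrite !tpowS le_tnorm ?tpow_in01.
Qed.

Lemma ltr_tpowS x y n : x \in I -> y \in I -> x < y -> tpow x n.+1 < tpow y n.+1.
Proof.
move=> xI yI xy; have y0 : 0 < y by apply: le_lt_trans xy; exact: in01_ge0.
have ynI := tpow_in01 n yI.
rewrite !tpowS; apply: le_lt_trans (lt_tnorml xI yI ynI (tpow_gt0 n yI y0) xy).
apply: le_tnorm => //; first exact: tpow_in01.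
by apply: ler_tpow => //; exact: ltW.
Qed.

Lemma ler_tpow_exp x m n : x \in I -> (m <= n)%N -> tpow x n <= tpow x m.
Proof. by move=> xI /subnKC <-; rewrite tpowD // tnorm_lel ?tpow_in01. Qed.

End strict_tnorm_algebra.

Section strict_tnorm_continuity.
Context {R : realType}.
Local Notation I := (`[0, 1] : interval R).
Variable T : R -> R -> R.
Hypothesis T_strict : strict_tnorm T.
Local Notation tpow := (tpow T).

Lemma tnorm_dist x y : x \in I -> y \in I -> forall e, 0 < e -> exists2 d, 0 < d &
  forall u v, u \in I -> v \in I -> `|x - u| < d -> `|y - v| < d ->
    `|T x y - T u v| < e.
Proof.
case: T_strict => _ [Tc _] xI yI e e0.
have [d d0 Hd] := within_continuous2_dist Tc (x := (x, y)) (conj xI yI) e0.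
by exists d => // u v uI vI; exact: (Hd (u, v)).
Qed.

(* Otherwise the infimum L > 0 of the T-powers of x satisfies T L L < L by
   strictness, while T (x^(n)) (x^(n)) = x^(2n) >= L with x^(n) close to L. *)
Lemma exists_tpow_lt x y : x \in I -> x < 1 -> 0 < y -> exists n, tpow x n < y.
Proof.
move=> xI x1 y0; apply: contrapT => /forallNP no_n.
have y_lb n : y <= tpow x n by rewrite leNgt; apply/negP/no_n.
have pw0 : range (tpow x) !=set0 by exists 1, 0%N.
have pw_lb : has_lbound (range (tpow x)) by exists y => _ [n _ <-].
pose L := inf (range (tpow x)).
have yL : y <= L by apply: lb_le_inf => // _ [n _ <-].
have Lx : L <= x by rewrite -(tpow1 T_strict xI); apply: ge_inf => //; exists 1%N.
have L0 : 0 < L by apply: lt_le_trans yL.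
have LI : L \in I by apply: in01; [exact: ltW | exact: le_trans Lx (in01_le1 xI)].
have LL : T L L < L.
  by rewrite -[X in _ < X](tnorm1r T_strict LI) lt_tnorml ?in01_1 // (le_lt_trans Lx).
have [d d0 Hd] := tnorm_dist LI LI (ltac:(rewrite subr_gt0; exact: LL) : 0 < L - T L L).
have [_ [n _ <-] pwL] := inf_adherent d0 (conj pw0 pw_lb).
have Lpw : L <= tpow x n by apply: ge_inf => //; exists n.
have pwI := tpow_in01 T_strict n xI.
have Lpw_d : `|L - tpow x n| < d by rewrite ltr_distlC; apply/andP; split; lra.
have := Hd _ _ pwI pwI Lpw_d Lpw_d.
rewrite -tpowD // ltr_distlC => /andP[_].
have : L <= tpow x (n + n) by apply: ge_inf => //; exists (n + n)%N.
lra.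
Qed.

Lemma tpow_near1 n e : 0 < e -> exists2 d, 0 < d &
  forall u, u \in I -> 1 - d < u -> 1 - e < tpow u n.
Proof.
elim: n e => [|n IH] e e0; first by exists 1 => // u _ _ /=; lra.
have [d1 d10 Hd1] := tnorm_dist in01_1 in01_1 e0.
have [d2 d20 Hd2] := IH d1 d10.
exists (Num.min d1 d2); first by rewrite lt_min d10 d20.
move=> u uI; rewrite ltrBlDr -ltrBlDl lt_min => /andP[ud1 ud2].
have unI := tpow_in01 T_strict n uI.
have un := Hd2 u uI (ltac:(lra)).
have := Hd1 u (tpow u n) uI unI; rewrite tnormr1 ?in01_1 // !ltr_distlC.
have := in01_le1 uI; have := in01_le1 unI.
move=> u1 un1 /(_ ltac:(apply/andP; split; lra) ltac:(apply/andP; split; lra)).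
rewrite tpowS; lra.
Qed.

Lemma exists_tpow_gt n c : c < 1 -> exists z, [/\ z \in I, 0 < z, z < 1 & c < tpow z n].
Proof.
move=> c1; have [d d0 Hd] := tpow_near1 n (ltac:(lra) : 0 < 1 - c).
have [z [zI z0 z1 zd]] := exists_in01_near1 d0.
by exists z; split => //; have := Hd z zI zd; lra.
Qed.

Lemma exists_tnorm_gt x y : x \in I -> y < x ->
  exists z, [/\ z \in I, 0 < z, z < 1 & y < T x z].
Proof.
move=> xI yx; have [d d0 Hd] := tnorm_dist xI in01_1 (ltac:(lra) : 0 < x - y).
have [z [zI z0 z1 zd]] := exists_in01_near1 d0.
exists z; split => //.
have := Hd x z xI zI; rewrite subrr normr0 tnormr1 // => /(_ d0).
have z_d : `|1 - z| < d by rewrite ltr_distlC; apply/andP; split; lra.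
by move=> /(_ z_d); rewrite ltr_distlC => /andP[+ _]; lra.
Qed.

End strict_tnorm_continuity.

Lemma ler_nat_frac {R : realFieldType} (m n m' n' : nat) : (0 < n)%N -> (0 < n')%N ->
  (m * n' <= m' * n)%N -> m%:R / n%:R <= m'%:R / n'%:R :> R.
Proof.
move=> n0 n'0 le_mn.
by rewrite ler_pdivrMr ?ltr0n // mulrAC ler_pdivlMr ?ltr0n // -!natrM ler_nat.
Qed.

Lemma natrS_div {R : fieldType} (m n : nat) : m.+1%:R / n%:R = m%:R / n%:R + n%:R^-1 :> R.
Proof. by rewrite -addn1 natrD mulrDl mul1r. Qed.

Section strict_tnorm_generator.
Context {R : realType}.
Local Notation I := (`[0, 1] : interval R).
Variable T : R -> R -> R.
Hypothesis T_strict : strict_tnorm T.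
Local Notation tpow := (tpow T).

Let c : R := 2^-1.
Let c_gt0 : 0 < c. Proof. by rewrite invr_gt0. Qed.
Let c_lt1 : c < 1. Proof. by rewrite invf_lt1 // ltr1n. Qed.
Let cI : c \in I. Proof. by rewrite in01 ?ltW. Qed.

(* A T-analogue of log_c: x^(n) <= c^(m) plays the role of m/n <= log_c x
   (with n shifted by one to avoid n = 0). *)
Definition tlog_set x :=
  [set r : R | exists m n : nat, tpow x n.+1 <= tpow c m /\ r = m%:R / n.+1%:R].
Definition tlog x := sup (tlog_set x).

Lemma tpow_bracket x n : x \in I -> 0 < x ->
  exists m, tpow x n.+1 <= tpow c m /\ tpow c m.+1 < tpow x n.+1.
Proof.
move=> xI x0.
have [k ck] := exists_tpow_lt T_strict cI c_lt1 (tpow_gt0 T_strict n.+1 xI x0).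
case: (ex_minnP (ex_intro (fun k => tpow c k < tpow x n.+1) k ck)) => -[|m] cm minm.
  by move: cm; rewrite ltNge in01_le1 // tpow_in01.
by exists m; split => //; rewrite leNgt; apply/negP => /minm; rewrite ltnn.
Qed.

Lemma tpow_bracket_ltn x n m n' m' : x \in I -> 0 < x ->
  tpow x n.+1 <= tpow c m -> tpow c m'.+1 < tpow x n'.+1 -> (m * n'.+1 < m'.+1 * n.+1)%N.
Proof.
move=> xI x0 le_xc lt_cx.
have A : tpow x (n.+1 * n'.+1) <= tpow c (m * n'.+1).
  by rewrite !tpowM // ler_tpow ?tpow_in01.
have B : tpow c (m'.+1 * n.+1) < tpow x (n'.+1 * n.+1).
  by rewrite !tpowM // ltr_tpowS ?tpow_in01.
rewrite [(n'.+1 * _)%N]mulnC in B.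
rewrite ltnNge; apply/negP => /(ler_tpow_exp T_strict cI); lra.
Qed.

Lemma tlog_set_ub x n' m' : x \in I -> 0 < x -> tpow c m'.+1 < tpow x n'.+1 ->
  ubound (tlog_set x) (m'.+1%:R / n'.+1%:R).
Proof.
move=> xI x0 lt_cx _ [m [n [le_xc ->]]].
by apply: ler_nat_frac => //; apply: ltnW; exact: tpow_bracket_ltn le_xc lt_cx.
Qed.

Lemma tlog_set_neq0 x : x \in I -> tlog_set x !=set0.
Proof.
move=> xI; exists 0, 0%N, 0%N; split; last by rewrite mul0r.
exact/in01_le1/tpow_in01.
Qed.

Lemma tlog_ge x n m : x \in I -> 0 < x -> tpow x n.+1 <= tpow c m ->
  m%:R / n.+1%:R <= tlog x.
Proof.
move=> xI x0 le_xc; apply: sup_upper_bound; last by exists m, n.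
split; first exact: tlog_set_neq0.
have [k [_ lt_cx]] := tpow_bracket 0 xI x0.
by exists (k.+1%:R / 1%:R); exact: tlog_set_ub lt_cx.
Qed.

Lemma tlog_le x n m : x \in I -> 0 < x -> tpow c m.+1 < tpow x n.+1 ->
  tlog x <= m.+1%:R / n.+1%:R.
Proof.
by move=> xI x0 lt_cx; apply: ge_sup (tlog_set_neq0 xI) (tlog_set_ub xI x0 lt_cx).
Qed.

Lemma tlog_tnorm x y : x \in I -> y \in I -> 0 < x -> 0 < y ->
  tlog (T x y) = tlog x + tlog y.
Proof.
move=> xI yI x0 y0.
have TI := tnorm_in01 T_strict xI yI; have T0 := tnorm_gt0 T_strict xI yI x0 y0.
have fracD k k' n : (k + k')%:R / n%:R = k%:R / n%:R + k'%:R / n%:R :> R.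
  by rewrite natrD mulrDl.
apply/eqP; rewrite eq_le; apply/andP; split; apply: ler_add_2invS => n;
  have [mx [le_xc lt_cx]] := tpow_bracket n xI x0;
  have [my [le_yc lt_cy]] := tpow_bracket n yI y0.
- have lt_cT : tpow c (mx + my).+2 < tpow (T x y) n.+1.
    rewrite tpow_tnorm // -addnS -addSn tpowD //.
    by rewrite lt_tnorm ?tpow_in01.
  move: (tlog_le TI T0 lt_cT) (tlog_ge xI x0 le_xc) (tlog_ge yI y0 le_yc).
  rewrite !natrS_div fracD; set A := mx%:R / _; set B := my%:R / _; set D := n.+1%:R^-1.
  lra.
- have le_Tc : tpow (T x y) n.+1 <= tpow c (mx + my).
    by rewrite tpow_tnorm // tpowD // le_tnorm ?tpow_in01.
  move: (tlog_ge TI T0 le_Tc) (tlog_le xI x0 lt_cx) (tlog_le yI y0 lt_cy).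
  rewrite !natrS_div fracD; set A := mx%:R / _; set B := my%:R / _; set D := n.+1%:R^-1.
  lra.
Qed.

Lemma tlog_ge0 x : x \in I -> 0 < x -> 0 <= tlog x.
Proof.
move=> xI x0; have := @tlog_ge x 0 0 xI x0; rewrite mul0r; apply.
exact/in01_le1/tpow_in01.
Qed.

Lemma le_tlog x y : x \in I -> y \in I -> 0 < x -> x <= y -> tlog y <= tlog x.
Proof.
move=> xI yI x0 xy; have y0 : 0 < y by apply: lt_le_trans xy.
apply: ler_add_2invS => n; have [m [le_yc lt_cy]] := tpow_bracket n yI y0.
have le_xc : tpow x n.+1 <= tpow c m by apply: le_trans le_yc; exact: ler_tpow.
move: (tlog_ge xI x0 le_xc) (tlog_le yI y0 lt_cy); rewrite natrS_div.
have : 0 <= n.+1%:R^-1 :> R by rewrite invr_ge0.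
set A := m%:R / _; set D := n.+1%:R^-1; lra.
Qed.

Lemma tlog1 : tlog 1 = 0.
Proof.
by have := tlog_tnorm in01_1 in01_1 ltr01 ltr01; rewrite (tnormr1 T_strict in01_1); lra.
Qed.

Lemma tlog_gt0 z : z \in I -> 0 < z -> z < 1 -> 0 < tlog z.
Proof.
move=> zI z0 z1; have [[|n] zc] := exists_tpow_lt T_strict zI z1 c_gt0.
  by move: zc; rewrite /= ltNge ltW.
apply: lt_le_trans (tlog_ge zI z0 (ltW _ : tpow z n.+1 <= tpow c 1)).
  by rewrite mul1r invr_gt0 ltr0n.
by rewrite tpow1.
Qed.

Lemma lt_tlog x y : x \in I -> y \in I -> 0 < x -> x < y -> tlog y < tlog x.
Proof.
move=> xI yI x0 xy; have y0 : 0 < y by apply: lt_trans xy.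
have [z [zI z0 z1 xyz]] := exists_tnorm_gt T_strict yI xy.
have := le_tlog xI (tnorm_in01 T_strict yI zI) x0 (ltW xyz).
by rewrite tlog_tnorm //; have := tlog_gt0 zI z0 z1; lra.
Qed.

Lemma exists_tlog_le e : 0 < e -> exists z, [/\ z \in I, 0 < z, z < 1 & tlog z <= e].
Proof.
move=> e0; pose n := Num.truncn e^-1.
have einv0 : 0 <= e^-1 by rewrite invr_ge0 ltW.
have en : e^-1 < n.+1%:R by case/andP: (truncn_itv einv0).
have [z [zI z0 z1 cz]] := exists_tpow_gt T_strict n.+1 c_lt1.
exists z; split => //.
apply: le_trans (tlog_le zI z0 (_ : tpow c 1 < tpow z n.+1)) _; first by rewrite tpow1.
by rewrite mul1r -[e]invrK lef_pV2 ?posrE ?ltr0n ?invr_gt0 // ltW.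
Qed.

Lemma tlog_tpow z k : z \in I -> 0 < z -> tlog (tpow z k) = k%:R * tlog z.
Proof.
move=> zI z0; elim: k => [|k IH]; first by rewrite tlog1 mul0r.
rewrite tpowS tlog_tnorm ?tpow_in01 ?tpow_gt0 // IH.
by rewrite -addn1 natrD mulrDl mul1r addrC.
Qed.

Lemma tlog_grid t e : 0 < t -> 0 < e -> exists z k,
  [/\ z \in I, 0 < z, k%:R * tlog z <= t, t < k.+1%:R * tlog z & tlog z <= e].
Proof.
move=> t0 e0; have [z [zI z0 z1 ze]] := exists_tlog_le e0.
have d0 := tlog_gt0 zI z0 z1.
have /andP[tk tk1] := truncn_itv (ltW (divr_gt0 t0 d0)).
by exists z, (Num.truncn (t / tlog z)); rewrite -ler_pdivlMr // -ltr_pdivrMr.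
Qed.

Lemma tlog_surj t : 0 <= t -> exists2 x, x \in I /\ 0 < x & tlog x = t.
Proof.
rewrite le_eqVlt => /predU1P[<-|t0]; first by exists 1; rewrite ?in01_1 ?tlog1.
pose A := [set y | (y \in I /\ 0 < y) /\ tlog y <= t].
have A1 : A 1 by split; rewrite ?in01_1 ?tlog1 ?ltW.
have A_lb : has_lbound A by exists 0 => y [[_ /ltW]].
have approx e : 0 < e -> (exists2 a, A a & t - e <= tlog a) /\
    exists2 b, (b \in I /\ 0 < b) /\ lbound A b & tlog b <= t + e.
  move=> e0; have [z [k [zI z0 tk tk1 ze]]] := tlog_grid t0 e0.
  have [zkI zk1I] := (tpow_in01 T_strict k zI, tpow_in01 T_strict k.+1 zI).
  have [zk0 zk10] := (tpow_gt0 T_strict k zI z0, tpow_gt0 T_strict k.+1 zI z0).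
  rewrite -!tlog_tpow // in tk tk1.
  have tzS : tlog (tpow z k.+1) = tlog (tpow z k) + tlog z.
    by rewrite !tlog_tpow // -addn1 natrD mulrDl mul1r.
  split; first by exists (tpow z k); [split | lra].
  exists (tpow z k.+1); last lra.
  split=> // y [[yI y0] ty]; rewrite leNgt; apply/negP => /(lt_tlog yI zk1I y0); lra.
pose x := inf A.
have [_ [b [[bI b0] b_lb] _]] := approx 1 ltr01.
have x0 : 0 < x by apply: lt_le_trans b0 (lb_le_inf _ b_lb); exists 1.
have xI : x \in I by apply: in01; [exact: ltW | exact: le_trans (ge_inf A_lb A1) _].
exists x => //; apply/eqP; rewrite eq_le; apply/andP; split; apply: ler_add_2invS => n;
  have e0 : 0 < 2 / n.+1%:R :> R by rewrite divr_gt0.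
- have [_ [b' [[b'I b'0] b'_lb] tb']] := approx _ e0.
  apply: le_trans tb'; apply: le_tlog => //; apply: lb_le_inf b'_lb.
  by exists 1.
- have [[a Aa ta] _] := approx _ e0; have [[aI a0] _] := Aa.
  rewrite -lerBlDr; apply: le_trans ta _; apply: le_tlog => //.
  exact: ge_inf.
Qed.

Definition tnorm_gen x := if 0 < x then expR (- tlog x) else 0.

Lemma tnorm_gen_bij01 : incr_bij01 tnorm_gen.
Proof.
rewrite /tnorm_gen; split; [|split].
- move=> x xI; case: ifP => x0; last exact: in01_0.
  by rewrite in01 ?expR_ge0 // expR_le1 oppr_le0 tlog_ge0.
- move=> x y xI yI xy; have y0 : 0 < y by apply: le_lt_trans xy; exact: in01_ge0.
  rewrite y0; case: ifP => x0; last exact: expR_gt0.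
  by rewrite ltr_expR ltrN2 lt_tlog.
- move=> z /[dup] zI /in01_eq0_or_gt0[->|z0]; first by exists 0; rewrite ?in01_0 ?ltxx.
  have [x [xI x0] tx] := tlog_surj (ltac:(by rewrite oppr_ge0 ln_le0 ?in01_le1) : 0 <= - ln z).
  by exists x; rewrite // x0 tx opprK lnK.
Qed.

Lemma tnorm_genM x y : x \in I -> y \in I -> tnorm_gen (T x y) = tnorm_gen x * tnorm_gen y.
Proof.
move=> xI yI; rewrite /tnorm_gen.
case: (in01_eq0_or_gt0 xI) => [->|x0]; first by rewrite tnorm0r // ltxx mul0r.
case: (in01_eq0_or_gt0 yI) => [->|y0]; first by rewrite tnormr0 // ltxx mulr0.
by rewrite tnorm_gt0 // x0 y0 tlog_tnorm // opprD expRD.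
Qed.

End strict_tnorm_generator.

Theorem strict_tnorm_mul_iso {R : realType} (T : R -> R -> R) : strict_tnorm T ->
  exists2 phi : R -> R, incr_bij01 phi &
    forall x y, x \in `[0, 1] -> y \in `[0, 1] -> T x y = inv01 phi (phi x * phi y).
Proof.
move=> T_strict; exists (tnorm_gen T); first exact: tnorm_gen_bij01.
move=> x y xI yI; rewrite -tnorm_genM // inv01K //; first exact: tnorm_gen_bij01.
exact: tnorm_in01.
Qed.

Section mul_conjugate.
Context {R : realType}.
Local Notation I := (`[0, 1] : interval R).
Variable phi : R -> R.
Hypothesis phi_bij : incr_bij01 phi.

Lemma mul_bij01_in01 x y : x \in I -> y \in I -> phi x * phi y \in I.
Proof. by move=> xI yI; rewrite in01_mul ?bij01_in01. Qed.

Lemma mul_bij01_continuous :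
  {within unit_sq, continuous (fun p : R * R => phi p.1 * phi p.2)}.
Proof. exact/within_continuous_mul01/bij01_continuous. Qed.

Lemma mul_conj_strict_tnorm : strict_tnorm (fun x y => inv01 phi (phi x * phi y)).
Proof.
have phiI := bij01_in01 phi_bij; have invI := inv01_in01 phi_bij.
have phiK := inv01KV phi_bij; have mulI := mul_bij01_in01.
have inv_bij := inv01_bij01 phi_bij.
split; [split; [|split; [|split; [|split]]]|split].
- by move=> x y xI yI; rewrite invI ?mulI.
- by move=> x y xI yI; rewrite mulrC.
- by move=> x y z xI yI zI; rewrite !phiK ?mulI ?in01_mul ?phiI // mulrA.
- move=> x x' y xI x'I yI xx'; have py := in01_ge0 (phiI y yI).
  have pxx' : phi x <= phi x' by rewrite bij01_le.
  by split; rewrite (bij01_le inv_bij) ?mulI // ?ler_wpM2l ?ler_wpM2r.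
- by move=> x xI; rewrite bij01_1 // mulr1 inv01K.
- apply: (@within_continuous_comp_within _ _ _ unit_sq unit_I).
  + by move=> p [pI qI]; exact: mulI.
  + exact: mul_bij01_continuous.
  + exact: bij01_continuous.
- move=> x x' y xI x'I yI y0 xx'.
  have py : 0 < phi y by rewrite -(bij01_0 phi_bij) bij01_lt ?in01_0.
  by rewrite (bij01_lt inv_bij) ?mulI // ltr_pM2r // bij01_lt.
Qed.

Lemma mul_conj_overlap (O : R -> R -> R) (H : R -> R) : pseudo_automorphism H ->
  (forall x y, x \in I -> y \in I -> O x y = H (phi x * phi y)) -> overlap O.
Proof.
move=> H_pa OE; have phiI := bij01_in01 phi_bij; have mulI := mul_bij01_in01.
split; [|split; [|split; [|split; [|split]]]].
- by move=> x y xI yI; rewrite OE ?(pa_in01 H_pa) ?mulI.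
- by move=> x y xI yI; rewrite !OE // mulrC.
- move=> x y xI yI; rewrite OE // (pa_eq0 H_pa) ?mulI //.
  have phi_eq0 z : z \in I -> (phi z == 0) = (z == 0).
    by move=> zI; have [? ?] := bij01_eq0 phi_bij zI; apply/eqP/eqP.
  by split=> /eqP; rewrite mulf_eq0 ?phi_eq0 // => /orP[] /eqP->;
    rewrite ?(bij01_0 phi_bij) ?mul0r ?mulr0.
- move=> x y xI yI; rewrite OE // (pa_eq1 H_pa) ?mulI //.
  by rewrite mul01_eq1 ?phiI // mul01_eq1 // !(bij01_eq1 phi_bij).
- move=> x x' y xI x'I yI xx'; have py := in01_ge0 (phiI y yI).
  have pxx' : phi x <= phi x' by rewrite bij01_le.
  by rewrite !OE //; split; apply: (pa_le H_pa); rewrite ?mulI ?ler_wpM2l ?ler_wpM2r.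
- apply: (@subspace_eq_continuous _ _ _ (H \o fun p : R * R => phi p.1 * phi p.2)).
    by move=> -[x y] /set_mem[/= xI yI]; rewrite /from_subspace /= OE.
  apply: (@within_continuous_comp_within _ _ _ unit_sq unit_I).
  + by move=> p [pI qI]; exact: mulI.
  + exact: mul_bij01_continuous.
  + exact: (pa_continuous H_pa).
Qed.

End mul_conjugate.

Definition mul_conj_rep {R : realType} (O : R -> R -> R) :=
  exists (phi : R -> R) (H : R -> R), incr_bij01 phi /\ pseudo_automorphism H /\
    (forall x y, x \in `[0, 1] -> y \in `[0, 1] -> O x y = H (phi x * phi y)).

Definition strict_tnorm_rep {R : realType} (O : R -> R -> R) :=
  exists (F : R -> R) (T : R -> R -> R), pseudo_automorphism F /\ strict_tnorm T /\
    (forall x y, x \in `[0, 1] -> y \in `[0, 1] -> O x y = F (T x y)).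

Lemma mul_conj_strict_tnorm_rep {R : realType} (O : R -> R -> R) :
  mul_conj_rep O -> strict_tnorm_rep O.
Proof.
move=> [phi [H [phi_bij [H_pa OE]]]].
exists (H \o phi), (fun x y => inv01 phi (phi x * phi y)).
split; first exact: pa_comp_bij01.
split; first exact: mul_conj_strict_tnorm.
by move=> x y xI yI; rewrite OE //= inv01KV ?mul_bij01_in01.
Qed.

Lemma strict_tnorm_mul_conj_rep {R : realType} (O : R -> R -> R) :
  strict_tnorm_rep O -> mul_conj_rep O.
Proof.
move=> [F [T [F_pa [T_strict OE]]]]; have [phi phi_bij TE] := strict_tnorm_mul_iso T_strict.
exists phi, (F \o inv01 phi); split => //; split; first exact/pa_comp_bij01/inv01_bij01.
by move=> x y xI yI; rewrite OE // TE.
Qed.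

Definition additive_rep {R : realType} (a : R) (O : R -> R -> R) :=
  exists (theta : R -> \bar R) (vtheta : \bar R -> R),
    (forall x, x \in `[0, 1] -> (0 <= theta x)%E) /\
    {within unit_I, continuous theta} /\
    (forall x y, x \in `[0, 1] -> y \in `[0, 1] -> x < y -> (theta y < theta x)%E) /\
    (forall u, (0 <= u)%E -> vtheta u \in `[0, 1]) /\
    {within ext_half, continuous vtheta} /\
    (forall u v, (0 <= u)%E -> (0 <= v)%E -> (u <= v)%E -> vtheta v <= vtheta u) /\
    (forall x y, x \in `[0, 1] -> y \in `[0, 1] -> O x y = vtheta (theta x + theta y)%E) /\
    overlap O /\
    ((forall x, x \in `[0, 1] -> (theta x = (a / 2)%:E <-> x = 1)) \/
     (forall u, (0 <= u)%E -> (vtheta u = 1 <-> (u <= a%:E)%E))).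

Section shifted_log_exp.
Context {R : realType}.
Local Notation I := (`[0, 1] : interval R).
Variable a : R.

Definition neglog_shift (s : R) : \bar R := if 0 < s then (a / 2 - ln s)%:E else +oo%E.

Definition exp_shift (u : \bar R) : R := if u is r%:E then Num.min 1 (expR (a - r)) else 0.

Lemma neglog_shift_ge0 s : 0 <= a -> s \in I -> (0 <= neglog_shift s)%E.
Proof.
move=> a0 sI; rewrite /neglog_shift; case: ifP => // s0.
by rewrite lee_fin subr_ge0 (le_trans (ln_le0 (in01_le1 sI))) ?divr_ge0.
Qed.

Lemma neglog_shift_lt s t : s \in I -> s < t -> (neglog_shift t < neglog_shift s)%E.
Proof.
move=> sI st; have t0 : 0 < t by apply: le_lt_trans st; exact: in01_ge0.
rewrite /neglog_shift t0; case: ifP => s0; last exact: ltry.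
by rewrite lte_fin ltrD2l ltrN2 ltr_ln.
Qed.

Lemma neglog_shift_eq s : s \in I -> (neglog_shift s = (a / 2)%:E <-> s = 1).
Proof.
move=> sI; rewrite /neglog_shift; split=> [|->]; last by rewrite ltr01 ln1 subr0.
case: ifP => // s0 [] h; have ln_s : ln s = 0 by lra.
by rewrite -[s]lnK ?posrE // ln_s expR0.
Qed.

Lemma neglog_shift_continuous : {within unit_I, continuous neglog_shift}.
Proof.
apply: dist_within_continuousE => [s _|s r /= sI|s /= sI].
- by rewrite /neglog_shift; case: ifP.
- rewrite /neglog_shift; case: ifP => // s0 [<-] e e0.
  have [d d0 Hd] := continuous_dist (continuous_ln s0) e0.
  exists (Num.min d s) => [|t _]; first by rewrite lt_min d0 s0.
  rewrite lt_min => /andP[std st]; have t0 : 0 < t by move: st; rewrite ltr_distlC; lra.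
  exists (a / 2 - ln t); first by rewrite t0.
  by rewrite opprB addrC addrA subrK distrC Hd.
- rewrite /neglog_shift; case: ifP => // s0 _ M.
  have -> : s = 0 by apply/eqP; rewrite eq_le in01_ge0 // leNgt s0.
  exists (expR (a / 2 - M)) => [|t _]; first exact: expR_gt0.
  rewrite sub0r normrN; case: ifP => t0; last by rewrite leey.
  rewrite gtr0_norm // lee_fin => t_lt.
  have : ln t < a / 2 - M by rewrite -ltr_expR lnK ?posrE.
  lra.
Qed.

Lemma exp_shift_in01 u : exp_shift u \in I.
Proof.
by case: u => [r| |] /=; rewrite ?in01_0 // in01 ?le_min ?ler01 ?expR_ge0 ?ge_min ?lexx.
Qed.

Lemma exp_shift_le u v : (0 <= u)%E -> (u <= v)%E -> exp_shift v <= exp_shift u.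
Proof.
case: u => [r| |] //; case: v => [s| |] //= _.
  rewrite lee_fin => rs; rewrite le_min !ge_min lexx /= ler_expR; lra.
Qed.

Lemma exp_shift_continuous : {within ext_half, continuous exp_shift}.
Proof.
apply: dist_within_continuous_ext_half => [e e0|r _ e e0].
  exists (a - ln e) => -[r| |] //= _; last by rewrite subrr normr0.
  rewrite lte_fin sub0r normrN ger0_norm ?(in01_ge0 (exp_shift_in01 r%:E)) // => er.
  rewrite gt_min; apply/orP; right.
  by rewrite -[X in _ < X]lnK ?posrE // ltr_expR; lra.
have [d d0 Hd] := continuous_dist (@continuous_expR R (a - r)) e0.
exists d => // s _ rs; apply: le_lt_trans (dist_min1_le _ _) _.
by apply: Hd; rewrite opprB addrC addrA subrK distrC.
Qed.

Lemma exp_shift_neglog s t : s \in I -> t \in I ->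
  exp_shift (neglog_shift s + neglog_shift t)%E = s * t.
Proof.
move=> sI tI; rewrite /neglog_shift.
case: (in01_eq0_or_gt0 sI) => [->|s0]; first by rewrite ltxx mul0r; case: ifP.
case: (in01_eq0_or_gt0 tI) => [->|t0]; first by rewrite ltxx mulr0 s0.
rewrite s0 t0 /=; have -> : a - (a / 2 - ln s + (a / 2 - ln t)) = ln s + ln t by field.
by rewrite -lnM ?posrE // lnK ?posrE ?mulr_gt0 //; apply/min_idPr/in01_le1/in01_mul.
Qed.

End shifted_log_exp.

Lemma mul_conj_additive_rep {R : realType} (a : R) (O : R -> R -> R) : 0 <= a ->
  mul_conj_rep O -> additive_rep a O.
Proof.
move=> a0 [phi [H [phi_bij [H_pa OE]]]]; have phiI := bij01_in01 phi_bij.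
exists (neglog_shift a \o phi), (H \o exp_shift a).
split; first by move=> x xI; exact/neglog_shift_ge0/phiI.
split.
  apply: (@within_continuous_comp_within _ _ _ unit_I unit_I) phiI _ _.
    exact: bij01_continuous.
  exact: neglog_shift_continuous.
split; first by move=> x y xI yI xy; rewrite /= neglog_shift_lt ?phiI ?bij01_lt.
split; first by move=> u _; exact/(pa_in01 H_pa)/exp_shift_in01.
split.
  apply: (@within_continuous_comp_within _ _ _ ext_half unit_I) => [u _||].
  - exact: exp_shift_in01.
  - exact: exp_shift_continuous.
  - exact: pa_continuous.
split.
  move=> u v u0 _ uv; apply: (pa_le H_pa); rewrite ?exp_shift_in01 //.
  exact: exp_shift_le.
split; first by move=> x y xI yI; rewrite OE //= exp_shift_neglog ?phiI.
split; first exact: mul_conj_overlap OE.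
by left => x xI; rewrite /= neglog_shift_eq ?phiI // bij01_eq1.
Qed.

Section overlap_properties.
Context {R : realType}.
Local Notation I := (`[0, 1] : interval R).
Variable O : R -> R -> R.
Hypothesis O_overlap : overlap O.

Lemma overlap_in01 x y : x \in I -> y \in I -> O x y \in I.
Proof. by case: O_overlap => + _; apply. Qed.

Lemma overlap_eq0 x y : x \in I -> y \in I -> (O x y = 0 <-> x * y = 0).
Proof. by case: O_overlap => _ [_ [+ _]]; apply. Qed.

Lemma overlap_eq1 x y : x \in I -> y \in I -> (O x y = 1 <-> x * y = 1).
Proof. by case: O_overlap => _ [_ [_ [+ _]]]; apply. Qed.

Lemma overlap_lel x x' y : x \in I -> x' \in I -> y \in I -> x <= x' -> O x y <= O x' y.
Proof. by case: O_overlap => _ [_ [_ [_ [mono _]]]] xI x'I yI /(mono _ _ y xI x'I yI)[]. Qed.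

Lemma overlap_continuous : {within unit_sq, continuous (fun p : R * R => O p.1 p.2)}.
Proof. by case: O_overlap => _ [_ [_ [_ [_ +]]]]. Qed.

End overlap_properties.

Section additive_to_mul_conj.
Context {R : realType}.
Local Notation I := (`[0, 1] : interval R).
Variable O : R -> R -> R.
Hypothesis O_overlap : overlap O.
Variables (theta : R -> \bar R) (vtheta : \bar R -> R).
Hypothesis theta_ge0 : forall x, x \in I -> (0 <= theta x)%E.
Hypothesis theta_continuous : {within unit_I, continuous theta}.
Hypothesis theta_lt : forall x y, x \in I -> y \in I -> x < y -> (theta y < theta x)%E.
Hypothesis vtheta_le :
  forall u v, (0 <= u)%E -> (0 <= v)%E -> (u <= v)%E -> vtheta v <= vtheta u.
Hypothesis OE : forall x y, x \in I -> y \in I -> O x y = vtheta (theta x + theta y)%E.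

Lemma theta_fin x : x \in I -> 0 < x -> theta x \is a fin_num.
Proof.
move=> xI x0; rewrite fin_numE; apply/andP; split.
  by apply: contraTN (theta_ge0 xI) => /eqP ->.
by apply: contraTN (theta_lt in01_0 xI x0) => /eqP ->; rewrite ltNge leey.
Qed.

Definition ftheta x := fine (theta x).

Lemma thetaE x : x \in I -> 0 < x -> theta x = (ftheta x)%:E.
Proof. by move=> xI x0; rewrite fineK ?theta_fin. Qed.

Lemma ftheta_lt x y : x \in I -> y \in I -> 0 < x -> x < y -> ftheta y < ftheta x.
Proof.
move=> xI yI x0 xy; have y0 : 0 < y by apply: lt_trans xy.
by rewrite -lte_fin -!thetaE // theta_lt.
Qed.

Lemma ftheta1_le x : x \in I -> 0 < x -> ftheta 1 <= ftheta x.
Proof.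
move=> xI x0; case: (eqVneq x 1) => [->//|x1].
by rewrite ltW // ftheta_lt ?in01_1 // lt_neqAle x1 in01_le1.
Qed.

(* If theta 0 were finite, continuity would give small y > 0 with
   theta y + theta y >= theta 1 + theta 0, hence 0 < O y y <= O 1 0 = 0. *)
Lemma theta0 : theta 0 = +oo%E.
Proof.
case E: (theta 0) => [b| |] //; last by have := theta_ge0 in01_0; rewrite E.
have fin x : x \in I -> theta x \is a fin_num.
  by move=> xI; case: (in01_eq0_or_gt0 xI) => [->|]; [rewrite E | exact: theta_fin].
have t1b : ftheta 1 < b by rewrite -lte_fin -E -thetaE ?theta_lt ?in01_0 ?in01_1.
have [|d d0 Hd] := within_continuous_dist (fine_within_continuous fin theta_continuous)
  in01_0 (e := (b - ftheta 1) / 2); first by rewrite divr_gt0 ?subr_gt0.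
have [y [yI y0 yd]] := exists_in01_gt0_lt d0.
have := Hd y yI; rewrite sub0r normrN gtr0_norm // => /(_ yd); rewrite /= E /= -/(ftheta y).
rewrite ltr_distlC => /andP[tyb _].
have b0 : 0 <= b by rewrite -lee_fin -E theta_ge0 ?in01_0.
have t1_0 : 0 <= ftheta 1 by rewrite -lee_fin -thetaE ?theta_ge0 ?in01_1.
have Oyy0 : O y y <= 0.
  rewrite -(proj2 (overlap_eq0 O_overlap in01_1 in01_0)) ?mulr0 //.
  rewrite !OE ?in01_0 ?in01_1 // E (thetaE yI y0) (thetaE in01_1 ltr01) -!EFinD.
  by apply: vtheta_le; rewrite lee_fin; lra.
have /(overlap_eq0 O_overlap yI yI) : O y y = 0.
  by apply/eqP; rewrite eq_le Oyy0 in01_ge0 ?overlap_in01.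
by move/eqP; rewrite mulf_eq0 orbb => /eqP y_eq0; move: y0; rewrite y_eq0 ltxx.
Qed.

Lemma ftheta_surj v : ftheta 1 <= v -> exists2 x, x \in I /\ 0 < x & ftheta x = v.
Proof.
move=> t1v.
have [d d0 Hd] := within_continuous_dist_pinfty theta_continuous in01_0 theta0 (v + 1).
have [x0 [x0I x00 x0d]] := exists_in01_gt0_lt d0.
have vx0 : v + 1 <= ftheta x0.
  by rewrite -lee_fin -thetaE // Hd // sub0r normrN gtr0_norm.
have sub : `[x0, 1] `<=` [set x | x \in I /\ 0 < x].
  move=> x /=; rewrite in_itv /= => /andP[x0x x1].
  by split; [rewrite in01 // (le_trans (ltW x00)) | exact: lt_le_trans x0x].
have fc : {within `[x0, 1], continuous ftheta}.
  apply: fine_within_continuous => [x /sub[]|]; first exact: theta_fin.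
  by apply: continuous_subspaceW theta_continuous => x /sub[].
have [|x /sub xI_x0] := IVT (in01_le1 x0I) fc (v := v).
  apply/andP; split; [rewrite ge_min; apply/orP; right | rewrite le_max; apply/orP; left]; lra.
by exists x.
Qed.

Definition theta_gen x := if 0 < x then expR (ftheta 1 - ftheta x) else 0.

Lemma theta_gen_bij01 : incr_bij01 theta_gen.
Proof.
rewrite /theta_gen; split; [|split].
- move=> x xI; case: ifP => x0; last exact: in01_0.
  by rewrite in01 ?expR_ge0 // expR_le1 subr_le0 ftheta1_le.
- move=> x y xI yI xy; have y0 : 0 < y by apply: le_lt_trans xy; exact: in01_ge0.
  rewrite y0; case: ifP => x0; last exact: expR_gt0.
  by rewrite ltr_expR ltrD2l ltrN2 ftheta_lt.
- move=> z /[dup] zI /in01_eq0_or_gt0[->|z0]; first by exists 0; rewrite ?in01_0 ?ltxx.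
  have [|x [xI x0] tx] := ftheta_surj (v := ftheta 1 - ln z).
    by rewrite lerDl oppr_ge0 ln_le0 ?in01_le1.
  by exists x; rewrite // x0 tx opprB addrC subrK lnK.
Qed.

Definition theta_outer s := O (inv01 theta_gen s) 1.

Lemma theta_outerE x y : x \in I -> y \in I ->
  O x y = theta_outer (theta_gen x * theta_gen y).
Proof.
move=> xI yI; have g_bij := theta_gen_bij01; rewrite /theta_outer.
have [zI gz] := inv01P g_bij (mul_bij01_in01 g_bij xI yI).
set z := inv01 _ _ in zI gz *.
have zero_case : x * y = 0 -> O x y = O z 1.
  move=> xy0; have -> : z = 0.
    apply/(bij01_eq0 g_bij zI); rewrite gz.
    by move/eqP: xy0; rewrite mulf_eq0 => /orP[]/eqP->; rewrite bij01_0 ?mul0r ?mulr0.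
  rewrite (proj2 (overlap_eq0 O_overlap xI yI) xy0); symmetry.
  by apply/(overlap_eq0 O_overlap in01_0 in01_1); rewrite mul0r.
case: (in01_eq0_or_gt0 xI) => [x0|x0]; first by apply: zero_case; rewrite x0 mul0r.
case: (in01_eq0_or_gt0 yI) => [y0|y0]; first by apply: zero_case; rewrite y0 mulr0.
have z0 : 0 < z.
  rewrite -(bij01_lt g_bij in01_0 zI) bij01_0 // gz mulr_gt0 //.
  - by rewrite -(bij01_0 g_bij) bij01_lt ?in01_0.
  - by rewrite -(bij01_0 g_bij) bij01_lt ?in01_0.
rewrite !OE ?in01_1 // !thetaE ?ltr01 ?in01_1 // -!EFinD.
by move: gz; rewrite /theta_gen x0 y0 z0 -expRD => /expR_inj ?; congr (vtheta _%:E); lra.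
Qed.

Lemma theta_outer_pa : pseudo_automorphism theta_outer.
Proof.
have inv_bij := inv01_bij01 theta_gen_bij01; have invI := bij01_in01 inv_bij.
rewrite /theta_outer; split; [|split; [|split; [|split]]].
- by move=> s sI; rewrite overlap_in01 ?invI ?in01_1.
- apply: (@within_continuous_comp_within _ _ _ unit_I unit_sq
    (fun s => (inv01 theta_gen s, 1)) (fun p => O p.1 p.2)).
  + by move=> s sI; split; rewrite /= ?invI ?in01_1.
  + move=> s; apply: (@cvg_pair _ _ _ _ (nbhs (inv01 theta_gen s)) (nbhs (1 : R))).
      exact: bij01_continuous inv_bij s.
    exact: cvg_cst.
  + exact: overlap_continuous.
- by move=> s t sI tI st; rewrite overlap_lel ?invI ?in01_1 ?bij01_le.
- by move=> s sI; rewrite overlap_eq1 ?invI ?in01_1 // mulr1 bij01_eq1.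
- by move=> s sI; rewrite overlap_eq0 ?invI ?in01_1 // mulr1 bij01_eq0.
Qed.

End additive_to_mul_conj.

Lemma additive_mul_conj_rep {R : realType} (a : R) (O : R -> R -> R) :
  additive_rep a O -> mul_conj_rep O.
Proof.
move=> [theta [vtheta [th0 [thc [thlt [_ [_ [vthle [rep_eq [rep_ov _]]]]]]]]]].
exists (theta_gen theta), (theta_outer O theta); split.
  exact (theta_gen_bij01 rep_ov th0 thc thlt vthle rep_eq).
split; first exact (theta_outer_pa rep_ov th0 thc thlt vthle rep_eq).
exact (theta_outerE rep_ov th0 thc thlt vthle rep_eq).
Qed.

Theorem theorem5p1 (R : realType) (a : R) (ha : 0 <= a) (O : R -> R -> R) :
  [<->
   (* (1) *)
   (exists (theta : R -> \bar R) (vtheta : \bar R -> R),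
      (forall x, x \in `[0, 1] -> (0 <= theta x)%E) /\
      {within unit_I, continuous theta} /\
      (forall x y, x \in `[0, 1] -> y \in `[0, 1] -> x < y ->
         (theta y < theta x)%E) /\
      (forall u, (0 <= u)%E -> vtheta u \in `[0, 1]) /\
      {within ext_half, continuous vtheta} /\
      (forall u v, (0 <= u)%E -> (0 <= v)%E -> (u <= v)%E ->
         vtheta v <= vtheta u) /\
      (forall x y, x \in `[0, 1] -> y \in `[0, 1] ->
         O x y = vtheta (theta x + theta y)%E) /\
      overlap O /\
      ((forall x, x \in `[0, 1] -> (theta x = (a / 2)%:E <-> x = 1)) \/
       (forall u, (0 <= u)%E -> (vtheta u = 1 <-> (u <= a%:E)%E))));
   (* (2) *)
   (overlap O /\
    exists (F : R -> R) (T : R -> R -> R),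
      pseudo_automorphism F /\ strict_tnorm T /\
      (forall x y, x \in `[0, 1] -> y \in `[0, 1] -> O x y = F (T x y)));
   (* (3) *)
   (exists (phi : R -> R) (H : R -> R),
      incr_bij01 phi /\ pseudo_automorphism H /\
      (forall x y, x \in `[0, 1] -> y \in `[0, 1] -> O x y = H (phi x * phi y)))
  ].
Proof.
tfae=> [rep1|[_ rep2]|rep3].
- split; first by case: rep1 => [? [? [_ [_ [_ [_ [_ [_ [_ []]]]]]]]]].
  exact/mul_conj_strict_tnorm_rep/(additive_mul_conj_rep rep1).
- exact: strict_tnorm_mul_conj_rep.
- exact: mul_conj_additive_rep.
Qed.
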